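(* Let $\mathbb{F}_q$ be a finite field. For any sets $\mathcal{A},\mathcal{B},\mathcal{C}\subseteq\mathbb{F}_q^*$ with cardinalities $A,B,C$ and any nontrivial multiplicative character $\chi$ of $\mathbb{F}_q$, $$|T_\chi(\mathcal{A},\mathcal{B},\mathcal{C})|\ll A^{1/2}\,\mathrm{E}(\mathcal{B}^{-1})^{1/4}\,\mathrm{E}(\mathcal{C}^{-1})^{1/4}\,q^{1/2}+A^{1/2}BC,$$ with an absolute implied constant.
   Context: $T_\chi(\mathcal{A},\mathcal{B},\mathcal{C})=\sum_{a\in\mathcal{A}}\sum_{b\in\mathcal{B}}\sum_{c\in\mathcal{C}}\chi(ab+ac+bc)$, with $\chi(0)=0$. For $\mathcal{U}\subseteq\mathbb{F}_q^*$, $\mathcal{U}^{-1}=\{u^{-1}:u\in\mathcal{U}\}$ and $\mathrm{E}(\mathcal{U})=\#\{(u_1,u_2,u_3,u_4)\in\mathcal{U}^4:u_1+u_2=u_3+u_4\}$. *)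

From mathcomp Require Import all_boot all_order all_algebra all_field.
Set Implicit Arguments. Unset Strict Implicit. Unset Printing Implicit Defensive.
Import Order.TTheory GRing.Theory Num.Theory.
Local Open Scope ring_scope.

(* A multiplicative character of F, extended by chi(0) = 0:
   a homomorphism F^* -> C^* (values nonzero since chi 1 = 1), with chi 0 = 0. *)
Definition mult_char (F : finFieldType) (chi : F -> algC) : Prop :=
  [/\ chi 0 = 0, chi 1 = 1 & forall x y : F, chi (x * y) = chi x * chi y].

Definition nontrivial_char (F : finFieldType) (chi : F -> algC) : Prop :=
  exists x : F, x != 0 /\ chi x != 1.

Definition Tchi (F : finFieldType) (chi : F -> algC) (A B C : {set F}) : algC :=
  \sum_(a in A) \sum_(b in B) \sum_(c in C) chi (a * b + a * c + b * c).

Definition set_inv (F : finFieldType) (U : {set F}) : {set F} :=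
  [set u^-1 | u in U].

Definition energy (F : finFieldType) (U : {set F}) : nat :=
  #|[set u : (F * F) * (F * F) |
      [&& u.1.1 \in U, u.1.2 \in U, u.2.1 \in U, u.2.2 \in U &
          u.1.1 + u.1.2 == u.2.1 + u.2.2]]|.

(* Write T = sum_(a in A) T_a with T_a = sum_(b in B, c in C) chi(a(b + c) + bc).
   By Cauchy-Schwarz |T|^2 <= |A| sum_(a in F) |T_a|^2, and opening the square
   turns each pair (b, c), (b', c') into a correlation
   sum_a chi(as + p) conj(chi(as' + p')) of two affine maps. After factoring out
   chi(s) conj(chi(s')) this is a shifted autocorrelation of chi, which equals -1,
   so it has modulus at most 1 unless s/p = s'/p', i.e. 1/b + 1/c = 1/b' + 1/c';
   it is at most q in any case. The number of such coincidences is the mixed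
   additive energy of B^-1 and C^-1, which Cauchy-Schwarz bounds by
   (E(B^-1) E(C^-1))^(1/2). Hence |T|^2 <= A (q (E(B^-1) E(C^-1))^(1/2) + (BC)^2),
   which gives the claim with constant 1. *)

From mathcomp Require Import all_boot all_order all_algebra all_field.
From mathcomp Require Import ring.
Set Implicit Arguments.
Unset Strict Implicit.
Unset Printing Implicit Defensive.

Import Order.TTheory GRing.Theory Num.Theory.
Local Open Scope ring_scope.

Lemma sum_mul_sqr_le (R : numDomainType) (I : finType) (P : pred I) (x y : I -> R) :
  (forall i, x i \is Num.real) -> (forall i, y i \is Num.real) ->
  (\sum_(i | P i) x i * y i) ^+ 2 <=
    (\sum_(i | P i) x i ^+ 2) * (\sum_(i | P i) y i ^+ 2).
Proof.
move=> xR yR; rewrite -subr_ge0 -(pmulrn_lge0 _ (ltn0Sn 1)).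
have lagrange_termE i j : (x i * y j - x j * y i) ^+ 2 =
    x i ^+ 2 * y j ^+ 2 + y i ^+ 2 * x j ^+ 2
    - (x i * y i * (x j * y j) + x i * y i * (x j * y j)) by ring.
have lagrangeE : \sum_(i | P i) \sum_(j | P j) (x i * y j - x j * y i) ^+ 2 =
    ((\sum_(i | P i) x i ^+ 2) * (\sum_(i | P i) y i ^+ 2)
       - (\sum_(i | P i) x i * y i) ^+ 2) *+ 2.
  under eq_bigr do under eq_bigr do rewrite lagrange_termE.
  under eq_bigr do rewrite sumrB !big_split /=.
  by rewrite sumrB !big_split /= -!big_distrlr /= -expr2; ring.
rewrite -lagrangeE.
by do 2![apply: sumr_ge0 => ? _]; rewrite real_exprn_even_ge0 ?realB ?realM.
Qed.

Lemma ler_sqrtC_of_sqr (C : numClosedFieldType) (t a q n m : C) :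
  0 <= t -> 0 <= a -> 0 <= q -> 0 <= n -> 0 <= m ->
  t ^+ 2 <= a * (q * n ^+ 2 + m ^+ 2) -> t <= sqrtC a * (n * sqrtC q + m).
Proof.
move=> t0 a0 q0 n0 m0 t_le.
have rhs_ge0 : 0 <= sqrtC a * (n * sqrtC q + m).
  by rewrite mulr_ge0 ?addr_ge0 ?mulr_ge0 ?sqrtC_ge0.
rewrite -(@ler_pXn2r _ 2) ?nnegrE //; apply: le_trans t_le _.
rewrite exprMn sqrtCK ler_wpM2l // sqrrD exprMn sqrtCK mulrC -addrA lerD2l lerDr.
by rewrite mulrn_wge0 // !mulr_ge0 ?sqrtC_ge0.
Qed.

Lemma card_set_sum (T : finType) (P : pred T) : #|[set u | P u]| = (\sum_u P u)%N.
Proof. by rewrite -sum1_card big_mkcond; apply: eq_bigr => u _; rewrite inE. Qed.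

Lemma sum_pair (T1 T2 : finType) (F : T1 * T2 -> nat) :
  (\sum_u F u = \sum_a \sum_b F (a, b))%N.
Proof. by rewrite pair_bigA; apply: eq_bigr => -[]. Qed.

Lemma sum_eq_mul_eq (T : finType) (s t : T) :
  (\sum_w ((s == w) * (t == w)) = (s == t))%N.
Proof.
rewrite (bigD1 s) //= eqxx mul1n big1 ?addn0 1?eq_sym // => w.
by rewrite eq_sym => /negbTE->.
Qed.

Section AdditiveEnergy.
Variable V : finZmodType.
Implicit Types X Y : {set V}.

Definition mixed_energy X Y : nat :=
  #|[set u : (V * V) * (V * V) |
      [&& u.1.1 \in X, u.1.2 \in Y, u.2.1 \in X, u.2.2 \in Y &
          u.1.1 + u.1.2 == u.2.1 + u.2.2]]|.

Definition diff_count X (w : V) : nat :=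
  #|[set u : V * V | [&& u.1 \in X, u.2 \in X & u.1 - u.2 == w]]|.

Lemma mixed_energy_diff_count X Y :
  mixed_energy X Y = (\sum_w diff_count X w * diff_count Y w)%N.
Proof.
have split_eq (a b : bool) (s w : V) :
    [&& a, b & s == w] = ((a && b) * (s == w))%N :> nat by rewrite mulnb andbA.
have fiberE x y x' y' :
    [&& x \in X, y \in Y, x' \in X, y' \in Y & x + y == x' + y'] =
    (\sum_w [&& x \in X, x' \in X & (x - x')%R == w] *
            [&& y' \in Y, y \in Y & (y' - y)%R == w])%N :> nat.
  under eq_bigr do rewrite !split_eq mulnACA.
  rewrite -big_distrr /= sum_eq_mul_eq !mulnb.
  have -> : (x - x' == y' - y) = (x + y == x' + y').
    by rewrite -subr_eq0 -[RHS]subr_eq0 opprB opprD addrACA.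
  by case: (x \in X); case: (y \in Y); case: (x' \in X); case: (y' \in Y).
rewrite /mixed_energy card_set_sum !sum_pair.
under eq_bigr do under eq_bigr do rewrite sum_pair /=.
under eq_bigr do under eq_bigr do under eq_bigr do under eq_bigr do rewrite fiberE.
(* Reorder the summation variables from x y x' y' w to w x x' y' y. *)
under eq_bigr do under eq_bigr do under eq_bigr do rewrite exchange_big.
under eq_bigr do under eq_bigr do rewrite exchange_big.
under eq_bigr do rewrite exchange_big.
rewrite exchange_big; apply: eq_bigr => w _.
under eq_bigr do rewrite exchange_big.
under eq_bigr do under eq_bigr do rewrite exchange_big.
rewrite /diff_count !card_set_sum !sum_pair big_distrl; apply: eq_bigr => x _.
rewrite big_distrl; apply: eq_bigr => x' _.
rewrite big_distrr; apply: eq_bigr => y' _.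
by rewrite big_distrr.
Qed.

Lemma mixed_energy_sq_le X Y :
  (mixed_energy X Y ^ 2 <= mixed_energy X X * mixed_energy Y Y)%N.
Proof.
rewrite !mixed_energy_diff_count -(ler_nat int) natrX natrM !natr_sum.
under eq_bigr do rewrite natrM.
under [X in _ <= X * _]eq_bigr do rewrite natrM.
under [X in _ <= _ * X]eq_bigr do rewrite natrM.
exact: sum_mul_sqr_le (fun _ => realn _ _) (fun _ => realn _ _).
Qed.

End AdditiveEnergy.

Section FieldEnergy.
Variable F : finFieldType.

Lemma energyE (U : {set F}) : energy U = mixed_energy U U.
Proof. by []. Qed.

Lemma mixed_energy_le_sqrtC (X Y : {set F}) :
  (mixed_energy X Y)%:R <= sqrtC (energy X)%:R * sqrtC (energy Y)%:R :> algC.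
Proof.
rewrite -sqrtCM ?nnegrE // -natrM -(@ler_pXn2r _ 2) ?nnegrE ?sqrtC_ge0 //.
by rewrite sqrtCK -natrX ler_nat !energyE mixed_energy_sq_le.
Qed.

Lemma mem_set_inv (U : {set F}) u : (u \in set_inv U) = (u^-1 \in U).
Proof.
apply/imsetP/idP => [[v vU ->]|u'U]; first by rewrite invrK.
by exists u^-1; rewrite ?invrK.
Qed.

Definition inv_sum (x : F * F) : F := x.1^-1 + x.2^-1.

Lemma inv_sum_coincidences (B C : {set F}) :
  (\sum_(x in setX B C) \sum_(y in setX B C) (inv_sum x == inv_sum y))%N =
  mixed_energy (set_inv B) (set_inv C).
Proof.
pose inv4 (u : (F * F) * (F * F)) := ((u.1.1^-1, u.1.2^-1), (u.2.1^-1, u.2.2^-1)).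
have inv4K : involutive inv4 by move=> [[? ?] [? ?]]; rewrite /inv4 /= !invrK.
rewrite /mixed_energy -(card_imset _ (inv_inj inv4K)) (can_imset_pre _ inv4K).
rewrite card_set_sum pair_big big_mkcond /=; apply: eq_bigr => -[[b c] [b' c']] _.
rewrite !inE /= !mem_set_inv /inv_sum /= !invrK.
by case: (b \in B); case: (c \in C); case: (b' \in B); case: (c' \in C).
Qed.

End FieldEnergy.

Section MultiplicativeCharacter.
Variables (F : finFieldType) (chi : F -> algC).
Hypothesis chi_mult : mult_char chi.

Lemma char0 : chi 0 = 0. Proof. by case: chi_mult. Qed.
Lemma char1 : chi 1 = 1. Proof. by case: chi_mult. Qed.
Lemma charM x y : chi (x * y) = chi x * chi y. Proof. by case: chi_mult. Qed.

Lemma charX x n : chi (x ^+ n) = chi x ^+ n.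
Proof. by elim: n => [|n IHn]; rewrite ?expr0 ?char1 // !exprS charM IHn. Qed.

Lemma char_neq0 x : x != 0 -> chi x != 0.
Proof.
move=> x_neq0; apply: contra_neq (oner_neq0 algC) => chi_x0.
by rewrite -char1 -(mulfV x_neq0) charM chi_x0 mul0r.
Qed.

Lemma charV x : x != 0 -> chi x^-1 = (chi x)^-1.
Proof. by move=> x_neq0; apply/esym/mulr1_eq; rewrite -charM mulfV ?char1. Qed.

Lemma norm_char x : x != 0 -> `|chi x| = 1.
Proof.
move=> x_neq0; have q_gt1 := finNzRing_gt1 F.
have q1_gt0 : (0 < #|F|.-1)%N by rewrite -ltnS prednK // ltnW.
have chi_unity : chi x ^+ #|F|.-1 = 1.
  apply: (mulfI (char_neq0 x_neq0)).
  by rewrite mulr1 -exprS prednK ?(ltnW q_gt1) // -charX expf_card.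
by apply/eqP; rewrite -(pexpr_eq1 q1_gt0 (normr_ge0 _)) -normrX chi_unity normr1.
Qed.

Lemma norm_char_le1 x : `|chi x| <= 1.
Proof.
have [->|x_neq0] := eqVneq x 0; last by rewrite norm_char.
by rewrite char0 normr0 ler01.
Qed.

Lemma conj_char x : (chi x)^* = chi x^-1.
Proof.
have [->|x_neq0] := eqVneq x 0; first by rewrite invr0 char0 conjC0.
by rewrite charV // invC_norm norm_char // expr1n invr1 mul1r.
Qed.

Lemma norm_sum_char_corr_le (f g : F -> F) :
  `|\sum_a chi (f a) * (chi (g a))^*| <= #|F|%:R.
Proof.
rewrite -sum1_card natr_sum; apply: le_trans (ler_norm_sum _ _ _) _.
apply: ler_sum => a _; rewrite normrM norm_conjC.
by apply: mulr_ile1; rewrite ?normr_ge0 ?norm_char_le1.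
Qed.

Hypothesis chi_nontrivial : nontrivial_char chi.

Lemma sum_char : \sum_x chi x = 0.
Proof.
have [y [y_neq0 chi_y_neq1]] := chi_nontrivial.
have : chi y * \sum_x chi x = \sum_x chi x.
  rewrite mulr_sumr [RHS](reindex_inj (mulfI y_neq0)) /=.
  by apply: eq_bigr => x _; rewrite charM.
move/eqP; rewrite -subr_eq0 -{2}(mul1r (\sum_x chi x)) -mulrBl mulf_eq0.
by rewrite subr_eq0 (negPf chi_y_neq1) => /eqP.
Qed.

Lemma sum_char_affine s t : s != 0 -> \sum_a chi (a * s + t) = 0.
Proof.
move=> s_neq0; have inj_affine : injective (fun a => a * s + t).
  by move=> a b /addIr /(mulIf s_neq0).
by rewrite -[RHS]sum_char [RHS](reindex_inj inj_affine).
Qed.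

Lemma sum_char_shift_corr t t' :
  t != t' -> \sum_a chi (a + t) * (chi (a + t'))^* = -1.
Proof.
move=> neq_tt'; set d := t - t'; have d_neq0 : d != 0 by rewrite subr_eq0.
have inj_shift : injective (fun a => a - t') by move=> a b /addIr.
have inj_scale : injective (fun a : F => d * a^-1).
  by move=> a b /(mulfI d_neq0)/invr_inj.
rewrite (reindex_inj inj_shift) /=.
have termE a :
    chi (a - t' + t) * (chi (a - t' + t'))^* = chi (d * a^-1 + 1) - (a == 0)%:R.
  rewrite subrK conj_char -charM.
  have [->|a_neq0] := eqVneq a 0.
    by rewrite !(invr0, mulr0, add0r, char0, char1, subrr).
  by rewrite subr0; congr chi; rewrite /d; field.
rewrite (eq_bigr _ (fun a _ => termE a)) sumrB (reindex_inj inj_scale) /=.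
under eq_bigr do rewrite invfM invrK mulrA mulfV // mul1r -[a in chi (a + 1)]mulr1.
rewrite sum_char_affine ?oner_neq0 // sub0r (bigD1 0) //= eqxx big1 ?addr0 // => a.
by move/negPf->.
Qed.

Lemma norm_sum_char_affine_corr_le1 s p s' p' :
  p != 0 -> p' != 0 -> s / p != s' / p' ->
  `|\sum_a chi (a * s + p) * (chi (a * s' + p'))^*| <= 1.
Proof.
move=> p_neq0 p'_neq0.
have [->|s_neq0] := eqVneq s 0; have [->|s'_neq0] := eqVneq s' 0 => neq_ratio.
- by rewrite !mul0r eqxx in neq_ratio.
- under eq_bigr do rewrite mulr0 add0r.
  by rewrite -mulr_sumr -rmorph_sum sum_char_affine // rmorph0 mulr0 normr0 ler01.
- under eq_bigr do rewrite mulr0 add0r.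
  by rewrite -mulr_suml sum_char_affine // mul0r normr0 ler01.
have factorE a u v : u != 0 -> chi (a * u + v) = chi u * chi (a + v / u).
  by move=> u_neq0; rewrite -charM; congr chi; field.
under eq_bigr do rewrite (factorE _ _ _ s_neq0) (factorE _ _ _ s'_neq0) rmorphM /= mulrACA.
have neq_shift : p / s != p' / s'.
  by apply: contra neq_ratio => /eqP eq_shift; rewrite -invf_div eq_shift invf_div.
rewrite -mulr_sumr sum_char_shift_corr // normrM normrN normr1 mulr1.
by rewrite normrM norm_conjC !norm_char // mulr1.
Qed.

Definition e2 (a : F) (x : F * F) : F := a * x.1 + a * x.2 + x.1 * x.2.

Definition Tchi_at (B C : {set F}) (a : F) : algC := \sum_(x in setX B C) chi (e2 a x).

Lemma Tchi_at_sum (A B C : {set F}) : Tchi chi A B C = \sum_(a in A) Tchi_at B C a.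
Proof.
apply: eq_bigr => a _; rewrite /Tchi_at pair_big_dep /=.
by apply: eq_bigl => -[b c]; rewrite in_setX.
Qed.

Lemma sum_sqr_Tchi_at (B C : {set F}) :
  \sum_a `|Tchi_at B C a| ^+ 2 =
  \sum_(x in setX B C) \sum_(y in setX B C) \sum_a chi (e2 a x) * (chi (e2 a y))^*.
Proof.
under eq_bigr do rewrite normCK /Tchi_at rmorph_sum mulr_suml.
under eq_bigr do under eq_bigr do rewrite mulr_sumr.
by rewrite exchange_big; apply: eq_bigr => x _; rewrite exchange_big.
Qed.

Lemma norm_corr_e2_le x y :
  x.1 != 0 -> x.2 != 0 -> y.1 != 0 -> y.2 != 0 ->
  `|\sum_a chi (e2 a x) * (chi (e2 a y))^*| <=
    #|F|%:R * (inv_sum x == inv_sum y)%:R + 1.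
Proof.
case: x y => [b c] [b' c'] /= b_neq0 c_neq0 b'_neq0 c'_neq0.
have [_|neq_inv_sum] := eqVneq (inv_sum (b, c)) (inv_sum (b', c')).
  by rewrite mulr1 (le_trans (norm_sum_char_corr_le _ _)) // lerDl ler01.
have e2E a u v : e2 a (u, v) = a * (u + v) + u * v by rewrite /e2 mulrDr.
have inv_sumE u v : u != 0 -> v != 0 -> inv_sum (u, v) = (u + v) / (u * v).
  by move=> u_neq0 v_neq0; rewrite /inv_sum /=; field; rewrite u_neq0 v_neq0.
rewrite mulr0 add0r; under eq_bigr do rewrite !e2E.
by apply: norm_sum_char_affine_corr_le1; rewrite ?mulf_neq0 // -!inv_sumE.
Qed.

Lemma sum_sqr_Tchi_at_le (B C : {set F}) : 0 \notin B -> 0 \notin C ->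
  \sum_a `|Tchi_at B C a| ^+ 2 <=
    #|F|%:R * (mixed_energy (set_inv B) (set_inv C))%:R + (#|B|%:R * #|C|%:R) ^+ 2.
Proof.
move=> B0 C0; have neq0 (U : {set F}) u : u \in U -> 0 \notin U -> u != 0.
  by move=> uU; apply: contraNneq => <-.
have coincidencesE : \sum_(x in setX B C) \sum_(y in setX B C)
    (#|F|%:R * (inv_sum x == inv_sum y)%:R) =
    #|F|%:R * (mixed_energy (set_inv B) (set_inv C))%:R :> algC.
  rewrite -inv_sum_coincidences natr_sum mulr_sumr; apply: eq_bigr => x _.
  by rewrite natr_sum mulr_sumr.
have pairsE : \sum_(x in setX B C) \sum_(y in setX B C) 1 =
    (#|B|%:R * #|C|%:R) ^+ 2 :> algC.
  by rewrite !sumr_const cardsX -mulrnA !natrM expr2.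
have sum_ge0 : 0 <= \sum_a `|Tchi_at B C a| ^+ 2.
  by apply: sumr_ge0 => a _; rewrite exprn_ge0.
rewrite -(ger0_norm sum_ge0) sum_sqr_Tchi_at -coincidencesE -pairsE -big_split /=.
apply: le_trans (ler_norm_sum _ _ _) _; apply: ler_sum => -[b c].
rewrite in_setX => /andP[bB cC]; rewrite -big_split /=.
apply: le_trans (ler_norm_sum _ _ _) _; apply: ler_sum => -[b' c'].
rewrite in_setX => /andP[b'B c'C].
exact: (norm_corr_e2_le (x := (b, c)) (y := (b', c'))
  (neq0 _ _ bB B0) (neq0 _ _ cC C0) (neq0 _ _ b'B B0) (neq0 _ _ c'C C0)).
Qed.

Lemma Tchi_sq_le (A B C : {set F}) : 0 \notin B -> 0 \notin C ->
  `|Tchi chi A B C| ^+ 2 <= #|A|%:R *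
    (#|F|%:R * (mixed_energy (set_inv B) (set_inv C))%:R + (#|B|%:R * #|C|%:R) ^+ 2).
Proof.
move=> B0 C0; apply: le_trans (ler_wpM2l (ler0n _ _) (sum_sqr_Tchi_at_le B0 C0)).
rewrite Tchi_at_sum.
have norm_le : `|\sum_(a in A) Tchi_at B C a| <= \sum_(a in A) `|Tchi_at B C a| * 1.
  by under [leRHS]eq_bigr do rewrite mulr1; exact: ler_norm_sum.
have sum_norm_ge0 : 0 <= \sum_(a in A) `|Tchi_at B C a| * 1.
  by apply: sumr_ge0 => a _; rewrite mulr1.
have sqr_le : `|\sum_(a in A) Tchi_at B C a| ^+ 2 <=
    (\sum_(a in A) `|Tchi_at B C a| * 1) ^+ 2 by rewrite ler_pXn2r ?nnegrE.
apply: le_trans sqr_le _.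
have cauchy_schwarz := sum_mul_sqr_le (x := fun a => `|Tchi_at B C a|) (y := fun _ => 1)
  (fun a => a \in A) (fun _ => normr_real _) (fun _ => real1 _).
apply: le_trans cauchy_schwarz _.
rewrite (eq_bigr (fun _ => 1) (fun _ _ => expr1n _ _)) sumr_const mulrC ler_wpM2l //.
rewrite [leRHS](bigID [in A]) /= lerDl.
by apply: sumr_ge0 => a _; rewrite exprn_ge0.
Qed.

End MultiplicativeCharacter.

Theorem lemma4p2 :
  exists K : algC, 0 < K /\
  forall (F : finFieldType) (chi : F -> algC) (A B C : {set F}),
    0 \notin A -> 0 \notin B -> 0 \notin C ->
    mult_char chi -> nontrivial_char chi ->
    `|Tchi chi A B C| <=
      K * (sqrtC (#|A|%:R) * sqrtC (sqrtC ((energy (set_inv B))%:R))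
             * sqrtC (sqrtC ((energy (set_inv C))%:R)) * sqrtC (#|F|%:R)
           + sqrtC (#|A|%:R) * #|B|%:R * #|C|%:R).
Proof.
exists 1; split => [|F chi A B C _ B0 C0 chi_mult chi_nontrivial]; first exact: ltr01.
have regroup (sa x y sq b c : algC) :
  sa * x * y * sq + sa * b * c = sa * (x * y * sq + b * c) by ring.
rewrite mul1r regroup; apply: ler_sqrtC_of_sqr; rewrite ?mulr_ge0 ?sqrtC_ge0 //.
apply: le_trans (Tchi_sq_le chi_mult chi_nontrivial A B0 C0) _.
rewrite ler_wpM2l // lerD2r ler_wpM2l // exprMn !sqrtCK.
exact: mixed_energy_le_sqrtC.
Qed.
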